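(* Let $A\in\mathbb{R}^{n\times n}$ be Metzler and Hurwitz stable, $b_0\in\mathbb{R}^n_{\ge0}$, $g_0:=-e_n^TA^{-1}b_0$, $g_n:=-e_n^TA^{-1}e_n$, $\beta>0$, and $r\in\big(g_0/(1+\beta g_n),\,g_0\big)$. For $k>0$ consider $$\dot x=Ax-x_nze_n+b_0,\qquad \dot z=-\frac{k}{\beta}z(\beta-z)(r-e_n^Tx),$$ and its equilibrium with $z^*=\dfrac{g_0-r}{g_nr}$ and $x^*=-A^{-1}(b_0-rz^*e_n)$. Then $z^*\in(0,\beta)$ and this equilibrium is locally exponentially stable for all $k>0$.
   Context: $e_i$ standard basis vectors; $x_n=e_n^Tx$. Metzler: all off-diagonal entries nonnegative. Hurwitz stable: all eigenvalues have negative real part. An equilibrium is called locally exponentially stable here if the Jacobian matrix of the vector field at the equilibrium is Hurwitz stable. *)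

From HB Require Import structures.
From mathcomp Require Import all_boot all_order all_algebra.
From mathcomp Require Import all_classical all_reals all_analysis.
From mathcomp Require Import complex.
Set Implicit Arguments. Unset Strict Implicit. Unset Printing Implicit Defensive.
Import Order.TTheory GRing.Theory Num.Theory.
Local Open Scope ring_scope.

Definition metzler (R : realType) (m : nat) (A : 'M[R]_m) : Prop :=
  forall i j : 'I_m, i != j -> 0 <= A i j.

Definition hurwitz (R : realType) (m : nat) (A : 'M[R]_m) : Prop :=
  forall lambda : R[i],
    eigenvalue (map_mx (fun a : R => (a%:C)%C) A) lambda -> complex.Re lambda < 0.

Definition jacobianM (R : realType) (m : nat) (F : 'cV[R]_m -> 'cV[R]_m)
  (p : 'cV[R]_m) : 'M[R]_m :=
  \matrix_(i, j) derive1 (fun t : R => F (p + t *: delta_mx j 0) i 0) 0.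

(* The closed-loop vector field on states (x, z) in R^(n+1) x R,
   encoded as col_mx x (z%:M) : 'cV_(n.+1 + 1). *)
Definition vfield (R : realType) (n : nat) (A : 'M[R]_n.+1) (b0 : 'cV[R]_n.+1)
  (k beta r : R) (v : 'cV[R]_(n.+1 + 1)) : 'cV[R]_(n.+1 + 1) :=
  let x := usubmx v in
  let z := dsubmx v 0 0 in
  let xn := x ord_max 0 in
  col_mx (A *m x - (xn * z) *: delta_mx ord_max 0 + b0)
         ((- (k / beta) * z * (beta - z) * (r - xn))%:M).

From HB Require Import structures.
From mathcomp Require Import all_boot all_order all_algebra.
From mathcomp Require Import all_classical all_reals all_analysis.
From mathcomp Require Import complex.
From mathcomp Require Import ring lra.
Import Order.TTheory GRing.Theory Num.Theory.
Local Open Scope ring_scope.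

(* At the equilibrium the Jacobian is the feedback matrix
   [[A - zs e_n e_n^T, -r e_n], [c e_n^T, 0]] with [c = k zs (beta - zs) / beta > 0].
   A Metzler Hurwitz matrix [M] admits positive vectors [p], [q] with [M p < 0] and
   [q^T M < 0] (continuation in the shift [M - u]); the diagonal weights [p_i / q_i]
   then make [y M D y^T] negative definite.  Weighting the [z]-coordinate by
   [c (p_n / q_n) / r] cancels the feedback coupling, so a left eigenvector
   [a + ib] for the eigenvalue [al + i be] satisfies
   [al * |a + ib|_W^2 = y M D y^T (a) + y M D y^T (b)]; for [al >= 0] this forces
   the [x]-parts and then, via the last row, the [z]-parts to vanish.  The bounds
   [0 < zs < beta] rearrange [g0 / (1 + beta gn) < r < g0], where [g0 >= 0] and
   [gn > 0] because [- A^-1] is entrywise nonnegative with positive diagonal. *)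

Lemma sumr_mul_eq_indicator {R : pzSemiRingType} {m : nat} (f : 'I_m -> R) (i : 'I_m) :
  \sum_j f j * (j == i)%:R = f i.
Proof. by rewrite (bigD1 i) //= eqxx mulr1 big1 ?addr0 // => j /negbTE ->; rewrite mulr0. Qed.

Lemma delta_mulmx_entry {R : pzSemiRingType} {m n p : nat} (i : 'I_m) (j : 'I_n)
    (B : 'M[R]_(n, p)) k l :
  (delta_mx i j *m B) k l = (k == i)%:R * B j l.
Proof.
rewrite mxE (bigD1 j) //= big1 ?addr0 => [|j' /negbTE j'j]; rewrite mxE ?j'j ?andbF ?mul0r //.
by rewrite eqxx andbT.
Qed.

Section LinearLyapunovVector.
Context {R : realType} {m : nat}.
Implicit Types (B C N : 'M[R]_m) (c p v w x : 'cV[R]_m).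

Definition lyapunov_vector B p := (forall i, 0 < p i 0) /\ (forall i, (B *m p) i 0 < 0).

Lemma metzler_trmx B : metzler B -> metzler B^T.
Proof. by move=> hB i j ij; rewrite mxE hB // eq_sym. Qed.

Lemma metzler_subr_scalar {B} u : metzler B -> metzler (B - u%:M).
Proof. by move=> hB i j ij; rewrite !mxE (negbTE ij) mulr0n subr0 hB. Qed.

Lemma metzler_subr_delta B a i : metzler B -> metzler (B - a *: delta_mx i i).
Proof.
move=> hB k l kl; rewrite !mxE.
have [eki|_] := eqVneq k i; last by rewrite mulr0 subr0 hB.
by rewrite -eki eq_sym (negbTE kl) mulr0 subr0 hB.
Qed.

Lemma mulmx_subr_scalarE B u p i : ((B - u%:M) *m p) i 0 = (B *m p) i 0 - u * p i 0.
Proof. by rewrite mulmxBl mul_scalar_mx !mxE. Qed.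

Lemma mulmx_oppinv B v : B \in unitmx -> B *m (- (invmx B *m v)) = - v.
Proof. by move=> Bu; rewrite mulmxN mulmxA mulmxV // mul1mx. Qed.

Lemma metzler_mulmx_lt0_gt0 {B x i} : metzler B -> (forall j, 0 <= x j 0) ->
  (B *m x) i 0 < 0 -> 0 < x i 0.
Proof.
move=> hB x_ge0; rewrite lt0r x_ge0 andbT; apply: contraTneq => xi0.
rewrite -leNgt mxE; apply: sumr_ge0 => j _.
have [<-|ij] := eqVneq i j; first by rewrite xi0 mulr0.
by rewrite mulr_ge0 ?hB.
Qed.

Lemma metzler_comparison {B p x} : metzler B -> lyapunov_vector B p ->
  (forall i, (B *m x) i 0 <= 0) -> forall i, 0 <= x i 0.
Proof.
move=> hB [p_gt0 Bp_lt0] Bx_le0 i; rewrite leNgt; apply/negP => xi_lt0.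
pose f j := - x j 0 / p j 0.
have [k _ kmax] := @arg_maxP _ _ _ i xpredT f isT.
set t := f k in kmax.
have t_gt0 : 0 < t by apply: lt_le_trans (kmax i isT); rewrite divr_gt0 ?oppr_gt0.
pose y := x + t *: p.
have y_ge0 j : 0 <= y j 0.
  have : - x j 0 / p j 0 <= t := kmax j isT.
  rewrite ler_pdivrMr ?p_gt0 // !mxE; clearbody t; lra.
have yk0 : y k 0 = 0 by rewrite !mxE /t /f divfK ?gt_eqF ?addrN.
have : (B *m y) k 0 < 0.
  have -> : (B *m y) k 0 = (B *m x) k 0 + t * (B *m p) k 0.
    by rewrite mulmxDr -scalemxAr !mxE.
  have : t * (B *m p) k 0 < 0 by rewrite pmulr_rlt0.
  have := Bx_le0 k; clearbody t; lra.
by move=> /(metzler_mulmx_lt0_gt0 hB y_ge0); rewrite yk0 ltxx.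
Qed.

Lemma metzler_oppinv_ge0 {B p v} : metzler B -> lyapunov_vector B p -> B \in unitmx ->
  (forall i, 0 <= v i 0) -> forall i, 0 <= (- (invmx B *m v)) i 0.
Proof.
move=> hB hp Bu v_ge0; apply: metzler_comparison hB hp _ => i.
by rewrite mulmx_oppinv // mxE oppr_le0.
Qed.

Lemma metzler_oppinv_delta_gt0 {B p} i : metzler B -> lyapunov_vector B p ->
  B \in unitmx -> 0 < - (invmx B *m (delta_mx i 0 : 'cV[R]_m)) i 0.
Proof.
move=> hB hp Bu; have e_ge0 j : 0 <= (delta_mx i 0 : 'cV[R]_m) j 0 by rewrite mxE ler0n.
have : (B *m - (invmx B *m (delta_mx i 0 : 'cV[R]_m))) i 0 < 0.
  by rewrite mulmx_oppinv // !mxE !eqxx ltrN10.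
by move/(metzler_mulmx_lt0_gt0 hB (metzler_oppinv_ge0 hB hp Bu e_ge0)); rewrite mxE.
Qed.

Lemma lyapunov_vector_shift_up {B u u' p} : u <= u' ->
  lyapunov_vector (B - u%:M) p -> lyapunov_vector (B - u'%:M) p.
Proof.
move=> uu' [p_gt0 Bp_lt0]; split=> // i; rewrite mulmx_subr_scalarE.
have := Bp_lt0 i; rewrite mulmx_subr_scalarE.
have := ler_wpM2r (ltW (p_gt0 i)) uu'; lra.
Qed.

Lemma lyapunov_vector_shift_down {B u p} : lyapunov_vector (B - u%:M) p ->
  exists2 e, 0 < e & lyapunov_vector (B - (u - e)%:M) p.
Proof.
move=> [p_gt0 Bp_lt0].
have [i0 _|m0] := pickP (@predT 'I_m); last by exists 1 => //; split=> i; have := m0 i.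
pose s i := ((B - u%:M) *m p) i 0 / p i 0.
have [k _ kmax] := @arg_maxP _ _ _ i0 xpredT s isT.
have sk_lt0 : s k < 0 by rewrite /s pmulr_llt0 ?invr_gt0.
exists (- s k / 2); first lra.
split=> // i; rewrite mulmx_subr_scalarE.
have : s i <= s k := kmax i isT.
rewrite {1}/s ler_pdivrMr // mulmx_subr_scalarE.
have : s k * p i 0 < 0 by rewrite pmulr_llt0.
move: (s k) => sk; nra.
Qed.

Lemma lyapunov_vector_large_shift B : exists u, lyapunov_vector (B - u%:M) (const_mx 1).
Proof.
exists (1 + \sum_i \sum_j `|B i j|); split=> i; first by rewrite mxE.
rewrite mulmx_subr_scalarE [const_mx 1 i 0]mxE mulr1 mxE.
under eq_bigr do rewrite mxE mulr1.
have : \sum_j B i j <= \sum_j `|B i j| by apply: ler_sum => j _; apply: ler_norm.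
have : \sum_j `|B i j| <= \sum_i \sum_j `|B i j|.
  by rewrite [leRHS](bigD1 i) //= lerDl sumr_ge0 // => l _; rewrite sumr_ge0.
lra.
Qed.

Lemma lyapunov_vector_subr_delta B p a i : 0 <= a ->
  lyapunov_vector B p -> lyapunov_vector (B - a *: delta_mx i i) p.
Proof.
move=> a_ge0 [p_gt0 Bp_lt0]; split=> // k.
have -> : ((B - a *: delta_mx i i) *m p) k 0 = (B *m p) k 0 - a * ((k == i)%:R * p i 0).
  rewrite mulmxBl -scalemxAl [LHS]mxE [X in _ + X]mxE [X in _ - X]mxE.
  by rewrite delta_mulmx_entry.
have : 0 <= a * ((k == i)%:R * p i 0).
  by apply: mulr_ge0 => //; apply: mulr_ge0; [exact: ler0n | exact: ltW].
have := Bp_lt0 k; lra.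
Qed.

Definition vnorm1 v := \sum_i `|v i 0|.
Definition mnorm1 N := \sum_i \sum_j `|N i j|.

Lemma vnorm1_ge0 v : 0 <= vnorm1 v.
Proof. by rewrite sumr_ge0. Qed.

Lemma mnorm1_ge0 N : 0 <= mnorm1 N.
Proof. by rewrite sumr_ge0 // => i _; rewrite sumr_ge0. Qed.

Lemma normr_le_vnorm1 v i : `|v i 0| <= vnorm1 v.
Proof. by rewrite [leRHS](bigD1 i) //= lerDl sumr_ge0. Qed.

Lemma vnorm1_mulmx N v : vnorm1 (N *m v) <= mnorm1 N * vnorm1 v.
Proof.
rewrite /mnorm1 mulr_suml; apply: ler_sum => i _; rewrite mxE mulr_suml.
apply: le_trans (ler_norm_sum _ _ _) _; apply: ler_sum => j _.
by rewrite normrM ler_wpM2l ?normr_le_vnorm1.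
Qed.

Lemma vnorm1_addr_scale v w d : 0 <= d -> vnorm1 (v + d *: w) <= vnorm1 v + d * vnorm1 w.
Proof.
move=> d_ge0; rewrite /vnorm1 mulr_sumr -big_split /=; apply: ler_sum => i _.
by rewrite !mxE (le_trans (ler_normD _ _)) // normrM ger0_norm.
Qed.

Lemma resolvent_identity {C c d} : C \in unitmx -> C - d%:M \in unitmx ->
  - (invmx (C - d%:M) *m c) = - (invmx C *m c) + d *: (invmx C *m - (invmx (C - d%:M) *m c)).
Proof.
move=> Cu Cdu; set w := - (invmx (C - d%:M) *m c).
have Cw : C *m w = - c + d *: w.
  by rewrite -{1}(subrK d%:M C) mulmxDl mulmx_oppinv // mul_scalar_mx.
by rewrite -[LHS](mulKmx Cu) Cw mulmxDr mulmxN scalemxAr.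
Qed.

Lemma oppinv_ge0_closed {C c} : C \in unitmx ->
  (forall d, 0 < d -> C - d%:M \in unitmx /\
     forall i, 0 <= (- (invmx (C - d%:M) *m c)) i 0) ->
  forall i, 0 <= (- (invmx C *m c)) i 0.
Proof.
move=> Cu hd i; rewrite leNgt; apply/negP => Pi_lt0.
set P := - (invmx C *m c); pose K := mnorm1 (invmx C); pose Pn := vnorm1 P.
have K_ge0 : 0 <= K := mnorm1_ge0 _.
have Pn_ge0 : 0 <= Pn := vnorm1_ge0 _.
have a_le : - P i 0 <= Pn.
  by apply: le_trans (normr_le_vnorm1 P i); rewrite -normrN ler_norm.
(* [d] is small enough that [4 d K <= 1] and [4 d K |P| <= - P_i]; then the
   perturbed solution [w] has [d K |w| <= - P_i / 3], so [w_i < 0]. *)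
pose d := - P i 0 / (4 * (K + 1) * (Pn + 1)).
have d_gt0 : 0 < d by rewrite divr_gt0 ?oppr_gt0 // !mulr_gt0 //; lra.
have dE : d * (4 * (K + 1) * (Pn + 1)) = - P i 0.
  by rewrite divfK // !mulf_neq0 // gt_eqF //; lra.
have [Cdu w_ge0] := hd d d_gt0; set w := - (invmx (C - d%:M) *m c) in w_ge0.
have wE : w = P + d *: (invmx C *m w) := resolvent_identity Cu Cdu.
have Nw_le : `|(invmx C *m w) i 0| <= K * vnorm1 w.
  exact: le_trans (normr_le_vnorm1 _ _) (vnorm1_mulmx _ _).
have W_le : vnorm1 w <= Pn + d * (K * vnorm1 w).
  rewrite {1}wE (le_trans (vnorm1_addr_scale _ _ _ (ltW d_gt0))) // lerD2l.
  by rewrite ler_wpM2l ?vnorm1_mulmx // ltW.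
have wi : w i 0 = P i 0 + d * (invmx C *m w) i 0 by rewrite {1}wE !mxE.
have dNw_le : d * (invmx C *m w) i 0 <= d * K * vnorm1 w.
  by rewrite -mulrA ler_wpM2l ?(ltW d_gt0) // (le_trans (ler_norm _) Nw_le).
have dK_ge0 : 0 <= d * K by rewrite mulr_ge0 // ltW.
have dK_le : d * K * 4 <= 1 by nra.
have dKPn_le : d * K * Pn * 4 <= - P i 0 by nra.
have dKW_le : d * K * vnorm1 w * (1 - d * K) <= d * K * Pn.
  by have := ler_wpM2l dK_ge0 W_le; nra.
have : d * K * vnorm1 w * 3 <= - P i 0.
  move: (d * K) (vnorm1 w) (vnorm1_ge0 w) dK_ge0 dK_le dKPn_le dKW_le.
  by move=> x W W_ge0 x_ge0; have := mulr_ge0 x_ge0 W_ge0; nra.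
have := w_ge0 i; rewrite wi; lra.
Qed.

Lemma lyapunov_vector_shift_limit {B u} : metzler B ->
  (forall d, 0 <= d -> B - (u + d)%:M \in unitmx) ->
  (forall d, 0 < d -> exists p, lyapunov_vector (B - (u + d)%:M) p) ->
  exists p, lyapunov_vector (B - u%:M) p.
Proof.
move=> hB unit_shift lyap_shift.
have Bu : B - u%:M \in unitmx by have := unit_shift 0 (lexx 0); rewrite addr0.
pose P := - (invmx (B - u%:M) *m (const_mx 1 : 'cV[R]_m)).
have P_ge0 : forall i, 0 <= P i 0.
  apply: oppinv_ge0_closed Bu _ => d d_gt0.
  have -> : B - u%:M - d%:M = B - (u + d)%:M by rewrite raddfD opprD addrA.
  split; first by rewrite unit_shift // ltW.
  have [p hp] := lyap_shift d d_gt0.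
  apply: metzler_oppinv_ge0 (metzler_subr_scalar _ hB) hp (unit_shift _ (ltW d_gt0)) _ => i.
  by rewrite mxE.
have BP_lt0 i : ((B - u%:M) *m P) i 0 < 0 by rewrite mulmx_oppinv // !mxE ltrN10.
exists P; split=> // i.
exact: metzler_mulmx_lt0_gt0 (metzler_subr_scalar u hB) P_ge0 (BP_lt0 i).
Qed.

(* Continuation in [u]: the shifts admitting a Lyapunov vector form an up-closed
   set containing all large [u]; it is open, and closed while [B - u] stays
   invertible, so it contains [0]. *)
Theorem metzler_lyapunov_vector B : metzler B ->
  (forall u, 0 <= u -> \det (B - u%:M) != 0) -> exists p, lyapunov_vector B p.
Proof.
move=> hB hdet.
pose stable u := exists p, lyapunov_vector (B - u%:M) p.
have stable_up u u' : u <= u' -> stable u -> stable u'.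
  by move=> uu' [p hp]; exists p; apply: lyapunov_vector_shift_up hp.
have [u0 hu0] := lyapunov_vector_large_shift B.
apply: contrapT => not_stable0.
pose T : set R := fun u => 0 <= u /\ ~ stable u.
have T0 : T 0 by split=> // -[p]; rewrite raddf0 subr0 => hp; apply: not_stable0; exists p.
have T_ub u : T u -> u <= u0.
  move=> [_ hu]; rewrite leNgt; apply/negP => /ltW u0u.
  by apply/hu/(stable_up _ _ u0u); exists (const_mx 1).
have supT : has_sup T by split; [exists 0 | exists u0 => u /T_ub].
have us_ge0 : 0 <= sup T by apply: sup_upper_bound.
have stable_us : stable (sup T).
  apply: lyapunov_vector_shift_limit hB _ _ => d d_gt0.
    by rewrite unitmxE unitfE hdet // addr_ge0.
  apply: contrapT => hd; have : T (sup T + d) by split=> //; rewrite addr_ge0 // ltW.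
  by move/(sup_upper_bound supT); rewrite gerDl leNgt d_gt0.
have [e e_gt0 [p hp]] : exists2 e, 0 < e & stable (sup T - e).
  by case: stable_us => p /lyapunov_vector_shift_down [e e_gt0 hp]; exists e => //; exists p.
have [v [_ not_stable_v] lt_v] := sup_adherent e_gt0 supT.
by apply: not_stable_v; apply: stable_up (ltW lt_v) _; exists p.
Qed.

Lemma hurwitz_det_subr_scalar {B u} : hurwitz B -> 0 <= u -> \det (B - u%:M) != 0.
Proof.
move=> hH u_ge0; apply/negP => /det0P [v v_neq0 hv].
suff : complex.Re (u%:C)%C < 0 by rewrite /= ltNge u_ge0.
apply/hH/eigenvalueP; exists (map_mx (real_complex R) v); last by rewrite map_mx_eq0.
rewrite -map_mxM.
have -> : v *m B = u *: v.
  by apply/eqP; rewrite -subr_eq0 -mul_mx_scalar -mulmxBr hv.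
by rewrite map_mxZ.
Qed.

Corollary metzler_hurwitz_lyapunov_vector {B} : metzler B -> hurwitz B ->
  (exists p, lyapunov_vector B p) /\ (exists q, lyapunov_vector B^T q).
Proof.
move=> hB hH; split; apply: metzler_lyapunov_vector.
- exact: hB.
- by move=> u u_ge0; apply: hurwitz_det_subr_scalar.
- exact: metzler_trmx.
- by move=> u u_ge0; rewrite -(tr_scalar_mx _ u) -linearB det_tr hurwitz_det_subr_scalar.
Qed.

End LinearLyapunovVector.

Section WeightedForm.
Context {R : comNzRingType} {m : nat}.
Implicit Types (w y a b : 'rV[R]_m) (J : 'M[R]_m).

Definition weighted_form w y J := \sum_j w 0 j * y 0 j * (y *m J) 0 j.

(* [a] and [b] are the real and imaginary parts of a left eigenvector of [J]
   for the eigenvalue [al + i be]. *)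
Lemma weighted_form_eigen w {a b J al be} :
  a *m J = al *: a - be *: b -> b *m J = al *: b + be *: a ->
  weighted_form w a J + weighted_form w b J =
  al * \sum_j w 0 j * (a 0 j ^+ 2 + b 0 j ^+ 2).
Proof.
move=> aJ bJ; rewrite /weighted_form aJ bJ -big_split mulr_sumr /=.
by apply: eq_bigr => j _; rewrite !mxE; ring.
Qed.

End WeightedForm.

Section DiagonalLyapunov.
Context {R : realType} {m : nat}.
Implicit Types (M : 'M[R]_m) (p q : 'cV[R]_m) (y : 'rV[R]_m).

Definition ratio_weights p q : 'rV[R]_m := \row_j (p j 0 / q j 0).

Lemma metzler_weighted_form_le {M p q y} : metzler M ->
  (forall j, 0 < p j 0) -> (forall j, 0 < q j 0) ->
  weighted_form (ratio_weights p q) y M <=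
  \sum_k (y 0 k ^+ 2 / q k 0 * (M *m p) k 0 +
          p k 0 * y 0 k ^+ 2 / q k 0 ^+ 2 * (M^T *m q) k 0) / 2.
Proof.
move=> hM p_gt0 q_gt0.
(* AM-GM on each term [w_l y_l y_k M_kl], weighting the two squares so that
   they recombine into [M p] and [M^T q]. *)
pose S k l := (p l 0 * M k l * y 0 k ^+ 2 / q k 0 +
               q k 0 * M k l * p l 0 * y 0 l ^+ 2 / q l 0 ^+ 2) / 2.
have term_le k l : p l 0 / q l 0 * y 0 l * (y 0 k * M k l) <= S k l.
  have qk := q_gt0 k; have ql := q_gt0 l; have pl := p_gt0 l.
  rewrite -subr_ge0 (_ : _ - _ = M k l * (p l 0 / (2 * q k 0 * q l 0 ^+ 2)) *
      (q l 0 * y 0 k - q k 0 * y 0 l) ^+ 2); last by rewrite /S; field; rewrite ?gt_eqF.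
  have [<-|kl] := eqVneq k l; first by rewrite subrr expr0n mulr0.
  apply: mulr_ge0 (sqr_ge0 _); apply: mulr_ge0; first exact: hM.
  by apply: divr_ge0; rewrite ?mulr_ge0 ?exprn_ge0 // ltW.
rewrite [leRHS](_ : _ = \sum_l \sum_k S k l); last first.
  under [RHS]eq_bigr do rewrite -mulr_suml big_split /=.
  rewrite -!mulr_suml; congr (_ * _); rewrite !big_split /=; congr (_ + _).
    rewrite exchange_big /=; apply: eq_bigr => k _; rewrite mxE mulr_sumr.
    by apply: eq_bigr => l _; ring.
  apply: eq_bigr => l _; rewrite mxE mulr_sumr.
  by apply: eq_bigr => k _; rewrite mxE; ring.
apply: ler_sum => l _; rewrite !mxE mulr_sumr.
by apply: ler_sum => k _; apply: term_le.
Qed.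

Lemma metzler_weighted_form_lt0 {M p q y} : metzler M -> lyapunov_vector M p ->
  lyapunov_vector M^T q -> y != 0 -> weighted_form (ratio_weights p q) y M < 0.
Proof.
move=> hM [p_gt0 Mp_lt0] [q_gt0 Mq_lt0] y_neq0.
apply: le_lt_trans (metzler_weighted_form_le hM p_gt0 q_gt0) _.
have [k yk_neq0] : exists k, y 0 k != 0.
  apply/existsP; apply: contraNT y_neq0 => /existsPn y0.
  by apply/eqP/matrixP => i j; rewrite ord1 mxE; apply/eqP/negbNE/y0.
pose c j := (M *m p) j 0 / q j 0 + p j 0 * (M^T *m q) j 0 / q j 0 ^+ 2.
have c_lt0 j : c j < 0.
  have : (M *m p) j 0 / q j 0 < 0 by rewrite pmulr_llt0 ?invr_gt0.
  have : p j 0 * (M^T *m q) j 0 / q j 0 ^+ 2 < 0.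
    by rewrite pmulr_llt0 ?invr_gt0 ?exprn_gt0 // pmulr_rlt0.
  rewrite /c; lra.
rewrite (eq_bigr (fun j => y 0 j ^+ 2 * c j / 2)) => [|j _]; last by rewrite /c; ring.
rewrite -mulr_suml pmulr_llt0 ?invr_gt0 // (bigD1 k) //=.
have : \sum_(j | j != k) y 0 j ^+ 2 * c j <= 0.
  by rewrite sumr_le0 // => j _; rewrite mulr_ge0_le0 ?sqr_ge0 // ltW.
have : y 0 k ^+ 2 * c k < 0 by rewrite pmulr_rlt0 // lt0r sqrf_eq0 yk_neq0 sqr_ge0.
lra.
Qed.

Lemma metzler_weighted_form_le0 {M p q} y : metzler M ->
  lyapunov_vector M p -> lyapunov_vector M^T q ->
  weighted_form (ratio_weights p q) y M <= 0.
Proof.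
move=> hM hp hq; have [->|y_neq0] := eqVneq y 0.
  by rewrite /weighted_form big1 // => j _; rewrite mul0mx !mxE !mulr0.
exact/ltW/metzler_weighted_form_lt0.
Qed.

End DiagonalLyapunov.

Section LeftEigenvectorParts.
Context {R : rcfType} {m : nat}.
Local Notation Re := (@complex.Re R).
Local Notation Im := (@complex.Im R).

Lemma complex_ReM (z w : R[i]) : Re (z * w) = Re z * Re w - Im z * Im w.
Proof. by case: z w => [a b] [c d]. Qed.

Lemma complex_ImM (z w : R[i]) : Im (z * w) = Re z * Im w + Im z * Re w.
Proof. by case: z w => [a b] [c d] /=; rewrite addrC. Qed.

Lemma left_eigen_re_im {J : 'M[R]_m} {u : 'rV[R[i]]_m} {lam : R[i]} :
  u *m map_mx (fun x => (x%:C)%C) J = lam *: u ->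
  map_mx Re u *m J = Re lam *: map_mx Re u - Im lam *: map_mx Im u /\
  map_mx Im u *m J = Re lam *: map_mx Im u + Im lam *: map_mx Re u.
Proof.
move=> /matrixP uJ; split; apply/matrixP => i j; have := uJ i j; rewrite !mxE => e.
- rewrite -[RHS]complex_ReM -e raddf_sum; apply: eq_bigr => l _.
  by rewrite !mxE /= complex_ReM /= mulr0 subr0.
- rewrite -[RHS]complex_ImM -e raddf_sum; apply: eq_bigr => l _.
  by rewrite !mxE /= complex_ImM /= mulr0 add0r.
Qed.

End LeftEigenvectorParts.

Section FeedbackMatrix.
Context {R : realType} {m : nat}.
Implicit Types (M : 'M[R]_m.+1) (p q : 'cV[R]_m.+1) (wx : 'rV[R]_m.+1).

Definition feedback_mx M (r c : R) : 'M[R]_(m.+1 + 1) :=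
  block_mx M (- r *: delta_mx ord_max 0) (c *: delta_mx 0 ord_max) 0.

(* With the last weight chosen as [c w_n / r] the two off-diagonal blocks
   contribute opposite amounts, so only the [M]-block remains. *)
Lemma weighted_form_feedback M r c wx (y : 'rV[R]_(m.+1 + 1)) : r != 0 ->
  weighted_form (row_mx wx (c * wx 0 ord_max / r)%:M) y (feedback_mx M r c) =
  weighted_form wx (lsubmx y) M.
Proof.
move=> r_neq0; rewrite -[y]hsubmxK row_mxKl; move: (lsubmx y) (rsubmx y) => yx ys.
rewrite /weighted_form mul_row_block big_split_ord big_ord1 /=.
rewrite (eq_bigr (fun l => wx 0 l * yx 0 l * (yx *m M) 0 l +
    wx 0 l * yx 0 l * c * ys 0 0 * (l == ord_max)%:R)) => [|l _]; last first.
  by rewrite !row_mxEl !mxE big_ord1 !mxE eqxx; ring.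
rewrite big_split sumr_mul_eq_indicator /= !row_mxEr !mxE big_ord1 !mxE.
have -> : \sum_j yx 0 j * (- r *: delta_mx ord_max 0 : 'cV_m.+1) j ord0 = - r * yx 0 ord_max.
  rewrite -(sumr_mul_eq_indicator (fun j => - r * yx 0 j)).
  by apply: eq_bigr => j _; rewrite !mxE andbT; ring.
by rewrite eqxx mulr1n; field.
Qed.

Lemma feedback_eigen_lsubmx_eq0 {M p q r c} {a b : 'rV[R]_(m.+1 + 1)} {al be} :
  metzler M -> lyapunov_vector M p -> lyapunov_vector M^T q ->
  0 < r -> 0 < c -> 0 <= al ->
  a *m feedback_mx M r c = al *: a - be *: b ->
  b *m feedback_mx M r c = al *: b + be *: a -> lsubmx a = 0 /\ lsubmx b = 0.
Proof.
move=> hM hp hq r_gt0 c_gt0 al_ge0 aJ bJ.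
have [p_gt0 _] := hp; have [q_gt0 _] := hq.
pose wx := ratio_weights p q.
pose w := row_mx wx (c * wx 0 ord_max / r)%:M.
have w_gt0 j : 0 < w 0 j.
  have wx_gt0 l : 0 < wx 0 l by rewrite mxE divr_gt0.
  case: (split_ordP j) => l ->; first by rewrite row_mxEl.
  by rewrite row_mxEr mxE ord1 eqxx mulr1n !divr_gt0 ?mulr_gt0.
have form_ge0 : 0 <= weighted_form w a (feedback_mx M r c) +
                    weighted_form w b (feedback_mx M r c).
  rewrite (weighted_form_eigen w aJ bJ) mulr_ge0 // sumr_ge0 // => j _.
  by rewrite mulr_ge0 ?addr_ge0 ?sqr_ge0 // ltW.
rewrite !weighted_form_feedback ?lt0r_neq0 // in form_ge0.
have lsub_eq0 y z : 0 <= weighted_form wx y M + weighted_form wx z M -> y = 0.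
  move=> yz_ge0; apply/eqP; apply: contraTT yz_ge0 => y_neq0; rewrite -ltNge.
  have := metzler_weighted_form_lt0 hM hp hq y_neq0.
  have := metzler_weighted_form_le0 z hM hp hq; rewrite -/wx; lra.
split; first exact: lsub_eq0 form_ge0.
by rewrite addrC in form_ge0; apply: lsub_eq0 form_ge0.
Qed.

Lemma feedback_eigen_eq0_of_lsubmx_eq0 {M r c} {y z : 'rV[R]_(m.+1 + 1)} {al be} :
  0 < c -> lsubmx y = 0 -> lsubmx z = 0 ->
  y *m feedback_mx M r c = al *: y + be *: z -> y = 0.
Proof.
move=> c_gt0 y0 z0 /matrixP/(_ 0 (lshift 1 ord_max)).
have lshift_eq0 (x : 'rV[R]_(m.+1 + 1)) : lsubmx x = 0 -> x 0 (lshift 1 ord_max) = 0.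
  by move=> x0; rewrite -[x]hsubmxK x0 row_mxEl mxE.
rewrite ![in RHS]mxE (lshift_eq0 y) ?(lshift_eq0 z) // !mulr0 addr0.
rewrite -[y]hsubmxK y0 mul_row_block row_mxEl mul0mx add0r mxE big_ord1 !mxE eqxx mulr1.
move/eqP; rewrite mulf_eq0 (gt_eqF c_gt0) orbF => /eqP ys0.
by rewrite (mx11_scalar (rsubmx y)) mxE ys0 raddf0 row_mx0.
Qed.

Theorem hurwitz_feedback_mx M p q r c : metzler M ->
  lyapunov_vector M p -> lyapunov_vector M^T q -> 0 < r -> 0 < c ->
  hurwitz (feedback_mx M r c).
Proof.
move=> hM hp hq r_gt0 c_gt0 lam /eigenvalueP [u uJ]; apply: contraNT => al_ge0.
rewrite -leNgt in al_ge0.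
have [aJ bJ] := left_eigen_re_im uJ.
have [a0 b0] := feedback_eigen_lsubmx_eq0 hM hp hq r_gt0 c_gt0 al_ge0 aJ bJ.
rewrite -scaleNr in aJ.
have a_eq0 := feedback_eigen_eq0_of_lsubmx_eq0 c_gt0 a0 b0 aJ.
have b_eq0 := feedback_eigen_eq0_of_lsubmx_eq0 c_gt0 b0 a0 bJ.
apply/eqP/matrixP => i j; rewrite mxE [LHS]complexE.
have /matrixP/(_ i j) := a_eq0; have /matrixP/(_ i j) := b_eq0; rewrite !mxE => -> ->.
by rewrite mulr0 addr0.
Qed.

End FeedbackMatrix.

Lemma derive1_cubic_at0 {R : realType} (f : R -> R) (c0 c1 c2 c3 : R) :
  (forall t, f t = c0 + c1 * t + c2 * t ^+ 2 + c3 * t ^+ 3) -> derive1 f 0 = c1.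
Proof.
move=> hf; have -> : f = horner (c0%:P + c1 *: 'X + c2 *: 'X^2 + c3 *: 'X^3).
  by apply/funext => t; rewrite hf !hornerE.
rewrite derive1E derive_val !(derivD, derivZ, derivC, derivX, derivXn) !hornerE /=; ring.
Qed.

Section Jacobian.
Context {R : realType} {n : nat} (A : 'M[R]_n.+1) (b0 : 'cV[R]_n.+1) (k beta r : R).
Local Notation e_n := (delta_mx ord_max 0 : 'cV[R]_n.+1).

Lemma vfield_col_mx (x : 'cV[R]_n.+1) (z : R) :
  vfield A b0 k beta r (col_mx x z%:M) =
  col_mx (A *m x - (x ord_max 0 * z) *: e_n + b0)
         ((- (k / beta) * z * (beta - z) * (r - x ord_max 0))%:M).
Proof. by rewrite /vfield col_mxKu col_mxKd mxE eqxx mulr1n. Qed.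

Lemma jacobian_vfield (xs : 'cV[R]_n.+1) (zs : R) : xs ord_max 0 = r ->
  jacobianM (vfield A b0 k beta r) (col_mx xs zs%:M) =
  feedback_mx (A - zs *: delta_mx ord_max ord_max) r (k / beta * zs * (beta - zs)).
Proof.
move=> xsn; apply/matrixP => i j.
have col_entry (M : 'M[R]_(n.+1 + 1)) : M i j = (M *m (delta_mx j 0 : 'cV_(n.+1 + 1))) i 0.
  by rewrite -colE mxE.
rewrite [RHS]col_entry mxE -[delta_mx j 0]vsubmxK mul_block_col.
move: (usubmx _) (dsubmx _) => dx dv; rewrite [dv]mx11_scalar; move: (dv 0 0) => dz.
have shiftE t :
    col_mx xs zs%:M + t *: col_mx dx dz%:M = col_mx (xs + t *: dx) (zs + t * dz)%:M.
  by rewrite scale_col_mx add_col_mx scale_scalar_mx raddfD.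
under eq_fun do rewrite shiftE vfield_col_mx.
case: (split_ordP i) => l ->;
  [under eq_fun do rewrite col_mxEu | under eq_fun do rewrite col_mxEd].
  rewrite col_mxEu mulmxBl -!scalemxAl mul_mx_scalar.
  apply: (derive1_cubic_at0 _ ((A *m xs + b0) l 0 - r * zs * (l == ord_max)%:R) _
    (- dx ord_max 0 * dz * (l == ord_max)%:R) 0) => t.
  rewrite mulmxDr -scalemxAr !(delta_mulmx_entry, mxE) xsn eqxx andbT; ring.
rewrite col_mxEd mul0mx addr0 -scalemxAl (ord1 l).
apply: (derive1_cubic_at0 _ 0 _ (k / beta * dx ord_max 0 * dz * (beta - zs - zs))
  (- (k / beta) * dx ord_max 0 * dz ^+ 2)) => t.
by rewrite !(delta_mulmx_entry, mxE) xsn eqxx mulr1n /=; ring.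
Qed.

End Jacobian.

Lemma equilibrium_bounds {R : realFieldType} {g0 gn beta r : R} :
  0 <= g0 -> 0 < gn -> 0 < beta -> g0 / (1 + beta * gn) < r -> r < g0 ->
  0 < r /\ 0 < (g0 - r) / (gn * r) /\ (g0 - r) / (gn * r) < beta.
Proof.
move=> g0_ge0 gn_gt0 beta_gt0 r_gt r_lt.
have den_gt0 : 0 < 1 + beta * gn by rewrite ltr_wpDr ?mulr_ge0 ?ltW.
have r_gt0 : 0 < r by apply: le_lt_trans r_gt; rewrite divr_ge0 // ltW.
rewrite ltr_pdivrMr // in r_gt.
split=> //; split; first by rewrite divr_gt0 ?mulr_gt0 // subr_gt0.
by rewrite ltr_pdivrMr ?mulr_gt0 //; lra.
Qed.

Theorem mainTheorem19 (R : realType) (n : nat) (A : 'M[R]_n.+1)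
  (b0 : 'cV[R]_n.+1) (beta r : R) :
  metzler A -> hurwitz A ->
  (forall i, 0 <= b0 i 0) ->
  0 < beta ->
  let g0 := - (invmx A *m b0) ord_max 0 in
  let gn := - (invmx A *m (delta_mx ord_max 0 : 'cV[R]_n.+1)) ord_max 0 in
  g0 / (1 + beta * gn) < r -> r < g0 ->
  let zs := (g0 - r) / (gn * r) in
  let xs := - (invmx A *m (b0 - (r * zs) *: (delta_mx ord_max 0 : 'cV[R]_n.+1))) in
  (0 < zs /\ zs < beta) /\
  (forall k : R, 0 < k -> hurwitz (jacobianM (vfield A b0 k beta r) (col_mx xs zs%:M))).
Proof.
move=> hA hH b0_ge0 beta_gt0 g0 gn r_gt r_lt zs xs.
have [[p hp] [q hq]] := metzler_hurwitz_lyapunov_vector hA hH.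
have Au : A \in unitmx.
  by have := hurwitz_det_subr_scalar hH (lexx 0); rewrite raddf0 subr0 unitmxE unitfE.
have g0_ge0 : 0 <= g0 by have := metzler_oppinv_ge0 hA hp Au b0_ge0 ord_max; rewrite mxE.
have gn_gt0 : 0 < gn := metzler_oppinv_delta_gt0 ord_max hA hp Au.
have [r_gt0 [zs_gt0 zs_lt_beta]] := equilibrium_bounds g0_ge0 gn_gt0 beta_gt0 r_gt r_lt.
split=> // k k_gt0.
have xs_n : xs ord_max 0 = r.
  have zsE : r * zs * gn = g0 - r by rewrite /zs; field; rewrite !gt_eqF.
  have -> : xs = (r * zs) *: (invmx A *m delta_mx ord_max 0) - invmx A *m b0.
    by rewrite /xs mulmxBr -scalemxAr opprB.
  rewrite 2!mxE.
  have -> : (- (invmx A *m b0)) ord_max 0 = g0 by rewrite mxE.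
  have -> : (invmx A *m (delta_mx ord_max 0 : 'cV[R]_n.+1)) ord_max 0 = - gn.
    by rewrite /gn opprK.
  by move: zsE; clearbody xs zs g0 gn => zsE; lra.
rewrite jacobian_vfield //; apply: hurwitz_feedback_mx.
- exact: metzler_subr_delta.
- exact: lyapunov_vector_subr_delta (ltW zs_gt0) hp.
- by rewrite linearB linearZ /= trmx_delta; apply: lyapunov_vector_subr_delta (ltW zs_gt0) hq.
- exact: r_gt0.
- by rewrite mulr_gt0 ?subr_gt0 // mulr_gt0 // divr_gt0.
Qed.
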